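(* Let $U=\{u_1,\dots,u_{3n}\}$ with $n\ge1$ and let $\mathcal{S}=\{S_1,\dots,S_p\}$, $p\ge 1$, be a family of $3$-element subsets of $U$. Fix an integer $m\ge 6n+3p$. Build the labeled complete bipartite graph $G$ with partite sets $V_1=\{x_1,\dots,x_{3n}\}\cup\{x(S_1),\dots,x(S_p)\}$ and $V_2=\{y_1,\dots,y_{3n}\}\cup\{y_k(S_i):1\le i\le p,\,1\le k\le m\}\cup\{z_1,\dots,z_{3n}\}$, with labels: $x_iy_j$ is $+$ iff $i=j$ or $u_i,u_j$ lie in a common member of $\mathcal{S}$; $x(S_i)y_k(S_\ell)$ is $+$ iff $i=\ell$; $x_iy_k(S_j)$ and $x(S_j)y_i$ are $+$ iff $u_i\in S_j$; $x_iz_j$ is $+$ for all $i,j$; $x(S_i)z_j$ is $-$ for all $i,j$. Assign tolerances $t_{x(S_i)}=3$ and $t_{x_i}=m(d(u_i)-1)+(c(u_i)-2)+(3n-3)$, where $d(u_i)$ is the number of members of $\mathcal{S}$ containing $u_i$ and $c(u_i)$ is the number of $u_j\in U\setminus\{u_i\}$ lying in a common member of $\mathcal{S}$ with $u_i$. Suppose $G$ has a clustering in which each $v\in V_1$ has at most $t_v$ incident errors. Then for any $i\neq j$, the vertices $x(S_i)$ and $x(S_j)$ lie in different clusters.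
   Context: A clustering is a partition of $V(G)$. An error at a vertex $v$ is an incident edge that is a $+$ edge between different clusters or a $-$ edge within a cluster. *)

From HB Require Import structures.
From mathcomp Require Import all_boot all_order all_algebra.
Set Implicit Arguments. Unset Strict Implicit. Unset Printing Implicit Defensive.
Import Order.TTheory GRing.Theory Num.Theory.

(* Partite set V1 = {x_i} (inl i) + {x(S_i)} (inr i). *)
Definition V1 (n p : nat) : finType := ('I_(3*n) + 'I_p)%type.
(* Partite set V2 = {y_j} (inl (inl j)) + {y_k(S_i)} (inl (inr (i,k))) + {z_j} (inr j). *)
Definition V2 (n p m : nat) : finType := ('I_(3*n) + ('I_p * 'I_m) + 'I_(3*n))%type.
Definition Vtx (n p m : nat) : finType := (V1 n p + V2 n p m)%type.

Section Construction.
Variables (n p m : nat) (S : 'I_p -> {set 'I_(3*n)}).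

Definition common (i j : 'I_(3*n)) : bool := [exists k, (i \in S k) && (j \in S k)].

Definition dg (i : 'I_(3*n)) : nat := #|[set k | i \in S k]|.

Definition cn (i : 'I_(3*n)) : nat := #|[set j | (j != i) && common i j]|.

(* label of the edge between v in V1 and w in V2: true = '+', false = '-' *)
Definition plus_edge (v : V1 n p) (w : V2 n p m) : bool :=
  match v, w with
  | inl i, inl (inl j) => (i == j) || common i j
  | inl i, inl (inr (jk)) => i \in S jk.1
  | inl _, inr _ => true
  | inr i, inl (inl j) => j \in S i
  | inr i, inl (inr lk) => i == lk.1
  | inr _, inr _ => false
  end.

(* A clustering (partition of V(G)) given by a cluster label for each vertex. *)
(* Number of errors at v in V1: incident edges (all go to V2, the graph being
   complete bipartite) that are '+' between different clusters or '-' inside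
   a cluster. *)
Definition errors (cl : Vtx n p m -> nat) (v : V1 n p) : nat :=
  #|[set w : V2 n p m |
      if plus_edge v w then cl (inl v) != cl (inr w) else cl (inl v) == cl (inr w)]|.

Definition tol (v : V1 n p) : int :=
  match v with
  | inl i => (m%:Z * ((dg i)%:Z - 1) + ((cn i)%:Z - 2) + ((3*n)%:Z - 3))%R
  | inr _ => 3%:Z
  end.

End Construction.

From HB Require Import structures.
From mathcomp Require Import all_boot all_order all_algebra.
From mathcomp Require Import zify.
Import Order.TTheory GRing.Theory Num.Theory.

(* The m vertices y_k(S_i) are joined by + to x(S_i) and by - to x(S_j).
   If x(S_i) and x(S_j) shared a cluster, each y_k(S_i) would be an error at
   one of them: at x(S_i) if it lies outside that cluster, at x(S_j)
   otherwise.  Hence m <= 3 + 3, contradicting m >= 6n + 3p >= 9. *)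

Set Implicit Arguments.
Unset Strict Implicit.

Section ErrorsAtSetVertices.
Variables (n p m : nat) (S : 'I_p -> {set 'I_(3*n)}) (cl : Vtx n p m -> nat).

Definition yS (i : 'I_p) (k : 'I_m) : V2 n p m := inl (inr (i, k)).

Lemma yS_inj i : injective (yS i).
Proof. by move=> a b []. Qed.

Definition yS_with_set (i : 'I_p) : {set 'I_m} :=
  [set k | cl (inr (yS i k)) == cl (inl (inr i))].

Lemma errors_set_le3 (i : 'I_p) :
  (Posz (errors S cl (inr i)) <= tol m S (inr i))%R -> (errors S cl (inr i) <= 3)%N.
Proof. by rewrite /tol lez_nat. Qed.

Lemma card_yS_apart_le_errors (i : 'I_p) :
  (#|~: yS_with_set i| <= errors S cl (inr i))%N.
Proof.
rewrite -(card_imset _ (@yS_inj i)); apply: subset_leq_card.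
apply/subsetP => w /imsetP [k]; rewrite !inE => hk ->.
by rewrite /plus_edge /= eqxx eq_sym.
Qed.

Lemma card_yS_with_le_errors (i j : 'I_p) :
  i != j -> cl (inl (inr i)) = cl (inl (inr j)) ->
  (#|yS_with_set i| <= errors S cl (inr j))%N.
Proof.
move=> ij Ecl; rewrite -(card_imset _ (@yS_inj i)); apply: subset_leq_card.
apply/subsetP => w /imsetP [k]; rewrite !inE => hk ->.
by rewrite /plus_edge /= eq_sym (negbTE ij) -Ecl eq_sym.
Qed.

End ErrorsAtSetVertices.

Arguments yS {n p m}.
Unset Implicit Arguments.

Theorem lemma3 (n p m : nat) (S : 'I_p -> {set 'I_(3*n)})
  (hn : (1 <= n)%N) (hp : (1 <= p)%N)
  (hS3 : forall i, #|S i| = 3)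
  (hSinj : injective S)
  (hm : (6 * n + 3 * p <= m)%N)
  (cl : Vtx n p m -> nat)
  (htol : forall v : V1 n p, (Posz (errors S cl v) <= tol m S v)%R) :
  forall i j : 'I_p, i != j -> cl (inl (inr i)) != cl (inl (inr j)).
Proof.
move=> i j ij; apply/negP => /eqP Ecl.
have err_i := errors_set_le3 (htol (inr i)).
have err_j := errors_set_le3 (htol (inr j)).
have apart_i := card_yS_apart_le_errors S cl i.
have with_j := card_yS_with_le_errors S ij Ecl.
have : (m <= 3 + 3)%N.
  by rewrite -(card_ord m) -(cardsC (yS_with_set cl i)) leq_add ?(leq_trans with_j) ?(leq_trans apart_i).
by move: hm hn; lia.
Qed.
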